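(* Let $(\mathscr{C},\mathbb{E},\mathfrak{s})$ be an extriangulated category such that for every object $X$ the morphism $X\to 0$ is an $\mathbb{E}$-inflation and $0\to X$ is an $\mathbb{E}$-deflation, and let $\Sigma$, $\mathbf{E}^1$ and $\mathfrak{r}$ be as in the context. Then the triple $(\mathscr{C},\mathbf{E}^1,\mathfrak{r})$ satisfies the axioms (ET3) and (ET3)$^{\mathrm{op}}$, namely: (ET3) for any $\varepsilon\in\mathbf{E}^1(C,A)$, $\varepsilon'\in\mathbf{E}^1(C',A')$ with $\mathfrak{r}(\varepsilon)=[A\xrightarrow{x}B\xrightarrow{y}C]$, $\mathfrak{r}(\varepsilon')=[A'\xrightarrow{x'}B'\xrightarrow{y'}C']$, and any $a\colon A\to A'$, $b\colon B\to B'$ with $bx=x'a$, there exists $c\colon C\to C'$ with $cy=y'b$ and $\mathbf{E}^1(C,a)(\varepsilon)=\mathbf{E}^1(c,A')(\varepsilon')$; (ET3)$^{\mathrm{op}}$ for the same data and any $b\colon B\to B'$, $c\colon C\to C'$ with $y'b=cy$, there exists $a\colon A\to A'$ with $bx=x'a$ and $\mathbf{E}^1(C,a)(\varepsilon)=\mathbf{E}^1(c,A')(\varepsilon')$.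
   Context: An extriangulated category $(\mathscr{C},\mathbb{E},\mathfrak{s})$ is in the sense of Nakaoka–Palu: $\mathscr{C}$ additive, $\mathbb{E}\colon\mathscr{C}^{\mathrm{op}}\times\mathscr{C}\to Ab$ biadditive, $\mathfrak{s}$ an additive realisation assigning to $\delta\in\mathbb{E}(C,A)$ an equivalence class of sequences $[A\to B\to C]$, satisfying (ET1)–(ET4)$^{\mathrm{op}}$. For $a\colon A\to A'$ and $c\colon C'\to C$ write $a_*\delta=\mathbb{E}(C,a)(\delta)$ and $c^*\delta=\mathbb{E}(c,A)(\delta)$. A morphism $x\colon A\to B$ is an $\mathbb{E}$-inflation if $\mathfrak{s}(\delta)=[A\xrightarrow{x}B\to C]$ for some $\delta\in\mathbb{E}(C,A)$; dually for $\mathbb{E}$-deflations. For each object $Y$, $\Sigma Y$ is a chosen object with $\delta_Y\in\mathbb{E}(\Sigma Y,Y)$ such that $\mathfrak{s}(\delta_Y)=[Y\to 0\to\Sigma Y]$; for $f\colon X\to Y$, $\Sigma f$ is the unique morphism with $f_*\delta_X=(\Sigma f)^*\delta_Y$. $\mathbf{E}^1(C,A)=\mathscr{C}(C,\Sigma A)$, with $\mathbf{E}^1(C,a)(\varepsilon)=\Sigma a\circ\varepsilon$ and $\mathbf{E}^1(c,A)(\varepsilon)=\varepsilon\circ c$. The correspondence $\mathfrak{r}$ assigns to $\varepsilon\in\mathbf{E}^1(C,A)$ the class $\mathfrak{r}(\varepsilon)=\mathfrak{s}(\varepsilon^*\delta_A)$. *)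

From HB Require Import structures.
From mathcomp Require Import all_boot all_algebra.
Set Implicit Arguments. Unset Strict Implicit. Unset Printing Implicit Defensive.
Import GRing.Theory.
Local Open Scope ring_scope.

Record CatData := {
  Obj :> Type;
  Mor : Obj -> Obj -> zmodType;
  comp : forall A B C : Obj, Mor B C -> Mor A B -> Mor A C;
  idm : forall A : Obj, Mor A A;
  zobj : Obj;
  dsum : Obj -> Obj -> Obj;
  inl : forall A B : Obj, Mor A (dsum A B);
  inr : forall A B : Obj, Mor B (dsum A B);
  prl : forall A B : Obj, Mor (dsum A B) A;
  prr : forall A B : Obj, Mor (dsum A B) B
}.
Arguments Mor {c}.
Arguments comp {c A B C}.
Arguments idm {c}.
Arguments zobj {c}.
Arguments dsum {c}.
Arguments inl {c}. Arguments inr {c}. Arguments prl {c}. Arguments prr {c}.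

Definition is_additive (K : CatData) : Prop :=
  (forall (A B C D : K) (h : Mor C D) (g : Mor B C) (f : Mor A B),
      comp h (comp g f) = comp (comp h g) f) /\
  (forall (A B : K) (f : Mor A B), comp (idm B) f = f) /\
  (forall (A B : K) (f : Mor A B), comp f (idm A) = f) /\
  (forall (A B C : K) (g g' : Mor B C) (f : Mor A B),
      comp (g + g') f = comp g f + comp g' f) /\
  (forall (A B C : K) (g : Mor B C) (f f' : Mor A B),
      comp g (f + f') = comp g f + comp g f') /\
  (forall (A : K) (f : Mor zobj A), f = 0) /\
  (forall (A : K) (f : Mor A zobj), f = 0) /\
  (forall A B : K,
      comp (prl A B) (inl A B) = idm A /\ comp (prr A B) (inr A B) = idm B /\
      comp (prl A B) (inr A B) = 0 /\ comp (prr A B) (inl A B) = 0 /\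
      comp (inl A B) (prl A B) + comp (inr A B) (prr A B) = idm (dsum A B)).

Definition isom (K : CatData) (A B : K) (f : Mor A B) : Prop :=
  exists g : Mor B A, comp g f = idm A /\ comp f g = idm B.

Definition summ (K : CatData) (A A' B B' : K) (f : Mor A B) (g : Mor A' B')
  : Mor (dsum A A') (dsum B B') :=
  comp (inl B B') (comp f (prl A A')) + comp (inr B B') (comp g (prr A A')).

(* Ext C A = E(C,A); push a = E(C,a) = a_* ; pull c = E(c,A) = c^* ;
   real d = a representative A -> B -> C of the class s(d). *)
Record ExtData (K : CatData) := {
  Ext : K -> K -> zmodType;
  push : forall C A A' : K, Mor A A' -> Ext C A -> Ext C A';
  pull : forall C' C A : K, Mor C' C -> Ext C A -> Ext C' A;
  real : forall C A : K, Ext C A -> {B : K & (Mor A B * Mor B C)%type}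
}.
Arguments Ext {K}.
Arguments push {K e C A A'}.
Arguments pull {K e C' C A}.
Arguments real {K e C A}.

Section ExtDefs.
Variables (K : CatData) (X : ExtData K).

(* s(d) = [A -x-> B -y-> C]: equivalence of sequences via an isomorphism
   of middle terms commuting with the outer identities. *)
Definition realizes (C A B : K) (d : Ext X C A) (x : Mor A B) (y : Mor B C)
  : Prop :=
  exists b : Mor (projT1 (real d)) B,
    isom b /\ comp b (projT2 (real d)).1 = x /\ comp y b = (projT2 (real d)).2.

Definition is_inflation (A B : K) (x : Mor A B) : Prop :=
  exists (C : K) (d : Ext X C A) (y : Mor B C), realizes d x y.

Definition is_deflation (B C : K) (y : Mor B C) : Prop :=
  exists (A : K) (d : Ext X C A) (x : Mor A B), realizes d x y.

Definition ET1 : Prop :=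
  (forall (C A : K) (d : Ext X C A), push (idm A) d = d) /\
  (forall (C A : K) (d : Ext X C A), pull (idm C) d = d) /\
  (forall (C A A' A'' : K) (a : Mor A A') (a' : Mor A' A'') (d : Ext X C A),
      push (comp a' a) d = push a' (push a d)) /\
  (forall (C C' C'' A : K) (c : Mor C' C) (c' : Mor C'' C') (d : Ext X C A),
      pull (comp c c') d = pull c' (pull c d)) /\
  (forall (C C' A A' : K) (a : Mor A A') (c : Mor C' C) (d : Ext X C A),
      push a (pull c d) = pull c (push a d)) /\
  (forall (C A A' : K) (a : Mor A A') (d d' : Ext X C A),
      push a (d + d') = push a d + push a d') /\
  (forall (C C' A : K) (c : Mor C' C) (d d' : Ext X C A),
      pull c (d + d') = pull c d + pull c d') /\
  (forall (C A A' : K) (a a' : Mor A A') (d : Ext X C A),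
      push (a + a') d = push a d + push a' d) /\
  (forall (C C' A : K) (c c' : Mor C' C) (d : Ext X C A),
      pull (c + c') d = pull c d + pull c' d).

Definition is_realization : Prop :=
  forall (A B C A' B' C' : K) (d : Ext X C A) (d' : Ext X C' A')
    (x : Mor A B) (y : Mor B C) (x' : Mor A' B') (y' : Mor B' C')
    (a : Mor A A') (c : Mor C C'),
    realizes d x y -> realizes d' x' y' -> push a d = pull c d' ->
    exists b : Mor B B', comp b x = comp x' a /\ comp y' b = comp c y.

Definition dsumE (A C A' C' : K) (d : Ext X C A) (d' : Ext X C' A')
  : Ext X (dsum C C') (dsum A A') :=
  push (inl A A') (pull (prl C C') d) + push (inr A A') (pull (prr C C') d').

Definition is_additive_realization : Prop :=
  is_realization /\
  (forall A C : K, realizes (0 : Ext X C A) (inl A C) (prr A C)) /\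
  (forall (A B C A' B' C' : K) (d : Ext X C A) (d' : Ext X C' A')
     (x : Mor A B) (y : Mor B C) (x' : Mor A' B') (y' : Mor B' C'),
     realizes d x y -> realizes d' x' y' ->
     realizes (dsumE d d') (summ x x') (summ y y')).

Definition ET2 : Prop := is_additive_realization.

Definition ET3 : Prop :=
  forall (A B C A' B' C' : K) (d : Ext X C A) (d' : Ext X C' A')
    (x : Mor A B) (y : Mor B C) (x' : Mor A' B') (y' : Mor B' C')
    (a : Mor A A') (b : Mor B B'),
    realizes d x y -> realizes d' x' y' -> comp b x = comp x' a ->
    exists c : Mor C C', comp c y = comp y' b /\ push a d = pull c d'.

Definition ET3op : Prop :=
  forall (A B C A' B' C' : K) (d : Ext X C A) (d' : Ext X C' A')
    (x : Mor A B) (y : Mor B C) (x' : Mor A' B') (y' : Mor B' C')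
    (b : Mor B B') (c : Mor C C'),
    realizes d x y -> realizes d' x' y' -> comp y' b = comp c y ->
    exists a : Mor A A', comp b x = comp x' a /\ push a d = pull c d'.

Definition ET4 : Prop :=
  forall (A B C D F : K) (d : Ext X D A) (d' : Ext X F B)
    (f : Mor A B) (f' : Mor B D) (g : Mor B C) (g' : Mor C F),
    realizes d f f' -> realizes d' g g' ->
    exists (E : K) (h : Mor A C) (h' : Mor C E) (dd : Mor D E) (e : Mor E F)
      (d'' : Ext X E A),
      realizes d'' h h' /\ realizes (push f' d') dd e /\
      pull dd d'' = d /\ push f d'' = pull e d' /\
      h = comp g f /\ comp h' g = comp dd f' /\ comp e h' = g'.

Definition ET4op : Prop :=
  forall (A B C D F : K) (d : Ext X B D) (d' : Ext X C F)
    (f' : Mor D A) (f : Mor A B) (g' : Mor F B) (g : Mor B C),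
    realizes d f' f -> realizes d' g' g ->
    exists (E : K) (dd : Mor D E) (e : Mor E F) (h' : Mor E A) (h : Mor A C)
      (d'' : Ext X C E),
      realizes d'' h' h /\ realizes (pull g' d) dd e /\
      d' = push e d'' /\ push dd d = pull g d'' /\
      comp h' dd = f' /\ comp f h' = comp g' e /\ h = comp g f.

Definition is_extriangulated : Prop :=
  ET1 /\ ET2 /\ ET3 /\ ET3op /\ ET4 /\ ET4op.

End ExtDefs.

(* The triple (C, E^1, r): E^1(C,A) = Mor(C, Sigma A),
   E^1(C,a)(eps) = Sigma a o eps, E^1(c,A)(eps) = eps o c,
   r(eps) = s(eps^* delta_A). *)
Definition E1data (K : CatData) (X : ExtData K) (Sigma : K -> K)
  (SigmaF : forall A A' : K, Mor A A' -> Mor (Sigma A) (Sigma A'))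
  (deltaS : forall A : K, Ext X (Sigma A) A) : ExtData K :=
  {| Ext := fun C A => Mor C (Sigma A);
     push := fun C A A' a e => comp (SigmaF A A' a) e;
     pull := fun C' C A c e => comp e c;
     real := fun C A e => real (pull e (deltaS A)) |}.

(* Pulling back [delta_A] along morphisms [W -> Sigma A] is injective: if
   [h^* delta_A = 0], then (ET2) compares the split sequence
   [A -> A (+) W -> W] realizing [0] with [A -> 0 -> Sigma A] realizing
   [delta_A], and the resulting [A (+) W -> 0] forces [h] to factor through
   the zero object.  Through the defining identity [a_* delta_A =
   (Sigma a)^* delta_A'] and functoriality, the equation required by (ET3)
   and (ET3)^op for [E^1] becomes an equation between pullbacks of
   [delta_A'], so both axioms follow from those of [E]. *)
From Pilot Require Import Defs.
From mathcomp Require Import all_boot all_algebra.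
Set Implicit Arguments.
Unset Strict Implicit.
Unset Printing Implicit Defensive.
Local Open Scope ring_scope.
Import GRing.Theory.

Section AdditiveMaps.
Variables (U V : zmodType) (f : U -> V).
Hypothesis fD : {morph f : x y / x + y}.

Lemma morphD_0 : f 0 = 0.
Proof. by apply: (@addrI _ (f 0)); rewrite -fD !addr0. Qed.

Lemma morphD_B : {morph f : x y / x - y}.
Proof.
have fN x : f (- x) = - f x.
  by apply: (@addrI _ (f x)); rewrite -fD !subrr morphD_0.
by move=> x y; rewrite fD fN.
Qed.

End AdditiveMaps.

Section ExtriangulatedFacts.
Variables (K : CatData) (X : ExtData K).
Hypotheses (HK : is_additive K) (H1 : ET1 X) (H2 : ET2 X).

Lemma comp0l (A B C : K) (f : Mor A B) : Defs.comp (0 : Mor B C) f = 0.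
Proof.
have [_ [_ [_ [compDl _]]]] := HK.
exact: (morphD_0 (fun g g' : Mor B C => compDl _ _ _ g g' f)).
Qed.

Lemma pullD (C C' A : K) (d : Ext X C A) :
  {morph (fun c : Mor C' C => pull c d) : c c' / c + c'}.
Proof.
have [_ [_ [_ [_ [_ [_ [_ [_ pullDl]]]]]]]] := H1.
by move=> c c'; apply: pullDl.
Qed.

Lemma pull_comp (C C' C'' A : K) (c : Mor C' C) (c' : Mor C'' C')
    (d : Ext X C A) :
  pull (Defs.comp c c') d = pull c' (pull c d).
Proof. by have [_ [_ [_ [pull_c _]]]] := H1; apply: pull_c. Qed.

Lemma push_pull (C C' A A' : K) (a : Mor A A') (c : Mor C' C)
    (d : Ext X C A) :
  push a (pull c d) = pull c (push a d).
Proof. by have [_ [_ [_ [_ [push_pull_c _]]]]] := H1; apply: push_pull_c. Qed.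

Variables (S A : K) (delta : Ext X S A) (x : Mor A zobj) (y : Mor zobj S).
Hypothesis Hdelta : realizes delta x y.

Lemma pull_eq0 (W : K) (h : Mor W S) : pull h delta = 0 -> h = 0.
Proof.
move=> hdelta0.
have [Hreal [Hsplit _]] := H2.
have [push_id _] := H1.
have [compA [_ [comp_id [_ [_ [from_zero [_ biprod]]]]]]] := HK.
have [_ [prr_inr _]] := biprod A W.
have [b [_ yb]] := Hreal A (dsum A W) W A zobj S 0 delta (inl A W) (prr A W)
  x y (idm A) h (Hsplit A W) Hdelta (etrans (push_id _ _ _) (esym hdelta0)).
by rewrite -(comp_id _ _ h) -prr_inr compA -yb (from_zero _ y) !comp0l.
Qed.

Lemma pull_inj (W : K) (f g : Mor W S) : pull f delta = pull g delta -> f = g.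
Proof.
move=> fg; apply/eqP; rewrite -subr_eq0; apply/eqP/pull_eq0.
by rewrite (morphD_B (pullD delta)) fg subrr.
Qed.

End ExtriangulatedFacts.

Section SuspensionExtensions.
Variables (K : CatData) (X : ExtData K).
Hypotheses (HK : is_additive K) (H1 : ET1 X) (H2 : ET2 X).
Variables (Sigma : K -> K) (deltaS : forall A : K, Ext X (Sigma A) A).
Hypothesis HS : forall A : K,
  realizes (deltaS A) (0 : Mor A zobj) (0 : Mor zobj (Sigma A)).
Variable SigmaF : forall A A' : K, Mor A A' -> Mor (Sigma A) (Sigma A').
Hypothesis HSF : forall (A A' : K) (f : Mor A A'),
  push f (deltaS A) = pull (SigmaF f) (deltaS A').

Lemma E1_push_pull_eq (A C A' C' : K) (e : Mor C (Sigma A))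
    (e' : Mor C' (Sigma A')) (a : Mor A A') (c : Mor C C') :
  push a (pull e (deltaS A)) = pull c (pull e' (deltaS A')) ->
  Defs.comp (SigmaF a) e = Defs.comp e' c.
Proof.
move=> eq_ext; apply: (pull_inj HK H1 H2 (HS A')).
by rewrite !pull_comp // -HSF -push_pull.
Qed.

End SuspensionExtensions.

Theorem proposition3p12 (K : CatData) (X : ExtData K)
  (HK : is_additive K) (HX : is_extriangulated X)
  (Hinf : forall A : K, is_inflation X (0 : Mor A zobj))
  (Hdef : forall A : K, is_deflation X (0 : Mor zobj A))
  (Sigma : K -> K) (deltaS : forall A : K, Ext X (Sigma A) A)
  (HS : forall A : K, realizes (deltaS A) (0 : Mor A zobj) (0 : Mor zobj (Sigma A)))
  (SigmaF : forall A A' : K, Mor A A' -> Mor (Sigma A) (Sigma A'))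
  (HSF : forall (A A' : K) (f : Mor A A'),
      push f (deltaS A) = pull (SigmaF A A' f) (deltaS A')) :
  ET3 (E1data SigmaF deltaS) /\ ET3op (E1data SigmaF deltaS).
Proof.
have [H1 [H2 [H3 [H3op _]]]] := HX.
have E1_eq := E1_push_pull_eq HK H1 H2 HS HSF.
split.
- move=> A B C A' B' C' e e' x y x' y' a b r r' bx.
  have [c [cy eq_ext]] := H3 _ _ _ _ _ _ _ _ _ _ _ _ a b r r' bx.
  by exists c; split; last exact: E1_eq.
- move=> A B C A' B' C' e e' x y x' y' b c r r' yb.
  have [a [bx eq_ext]] := H3op _ _ _ _ _ _ _ _ _ _ _ _ b c r r' yb.
  by exists a; split; last exact: E1_eq.
Qed.
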